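(* Let $n,m$ be positive integers and $\mathbf{r}=(r_1,\dots,r_m)$, $\mathbf{s}=(s_1,\dots,s_m)$ sequences of nonnegative integers with sums $r$ and $s$. Then $|\mathrm{SB}^-(n,\mathbf{r},\mathbf{s})| = |\mathrm{SP}(n,r,s,m)|$.
   Context: Selberg permutations: let $A(n,r,s,m)$ be the set of distinct letters $x_i$ ($1\le i\le n$), $a_{ij}^{(k)}$ ($1\le i<j\le n$, $1\le k\le m$), $b_i^{(k)}$ ($1\le i\le n$, $1\le k\le r$), $c_i^{(k)}$ ($1\le i\le n$, $1\le k\le s$). $\mathrm{SP}(n,r,s,m)$ is the set of permutations (linear orderings) of $A(n,r,s,m)$ in which $x_1,\dots,x_n$ appear in this order, each $a_{ij}^{(k)}$ lies between $x_i$ and $x_j$, each $b_i^{(k)}$ lies before $x_i$, and each $c_i^{(k)}$ lies after $x_i$. Books: for nonnegative integers $p,q$, the $(n,p,q)^-$-staircase is the set of cells $(i,j)$ (row $i$, column $j$) with $1\le i\le p+n$, $1\le j\le n+q$, $i\le j+p$, excluding those with $i\le p$ and $j>n$; the cell $(j+p,j)$ ($1\le j\le n$) is its $j$th diagonal cell (so row $i>p$ contains the diagonal cell $(i,i-p)$, column $j\le n$ contains $(j+p,j)$, and other rows/columns contain none). Let page $i$ be the $(n,r_i,s_i)^-$-staircase, $1\le i\le m$, and identify the $j$th diagonal cells of all pages for each $j$. An $(n,\mathbf{r},\mathbf{s})^-$-Selberg book is a filling of the resulting cells with $1,\dots,(r+s+1)n+m\binom n2$, each used once, such that in each page every non-diagonal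 cell has entry larger than that of the diagonal cell in its row (if any) and smaller than that of the diagonal cell in its column (if any). $\mathrm{SB}^-(n,\mathbf{r},\mathbf{s})$ is the set of these. *)

From mathcomp Require Import all_boot.
Set Implicit Arguments. Unset Strict Implicit. Unset Printing Implicit Defensive.

(* Indices are 0-based ordinals: x_i ~ i : 'I_n, a_{ij}^{(k)} ~ ((i,j),k) with i<j,
   b_i^{(k)} ~ (i,k) : 'I_n * 'I_r, c_i^{(k)} ~ (i,k) : 'I_n * 'I_s. *)
Definition pairs (n : nat) := {p : 'I_n * 'I_n | p.1 < p.2}.

Definition Letter (n r s m : nat) : finType :=
  (('I_n + (pairs n * 'I_m)) + (('I_n * 'I_r) + ('I_n * 'I_s)))%type.

Section SPdef.
Variables n r s m : nat.
Definition lx (i : 'I_n) : Letter n r s m := inl (inl i).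
Definition la (p : pairs n) (k : 'I_m) : Letter n r s m := inl (inr (p, k)).
Definition lb (i : 'I_n) (k : 'I_r) : Letter n r s m := inr (inl (i, k)).
Definition lc (i : 'I_n) (k : 'I_s) : Letter n r s m := inr (inr (i, k)).

(* A linear ordering of A(n,r,s,m) is a bijection pos : A -> {0,..,|A|-1}
   (pos u = position of letter u). *)
Definition is_SP (pos : {ffun Letter n r s m -> 'I_#|Letter n r s m|}) : bool :=
  [&& injectiveb pos,
      [forall i : 'I_n, forall j : 'I_n, (i < j) ==> (pos (lx i) < pos (lx j))],
      [forall p : pairs n, forall k : 'I_m,
          (pos (lx (val p).1) < pos (la p k)) && (pos (la p k) < pos (lx (val p).2))],
      [forall i : 'I_n, forall k : 'I_r, pos (lb i k) < pos (lx i)] &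
      [forall i : 'I_n, forall k : 'I_s, pos (lx i) < pos (lc i k)]].

Definition SP : {set {ffun Letter n r s m -> 'I_#|Letter n r s m|}} :=
  [set pos | is_SP pos].
End SPdef.

Section SBdef.
Variables (n m : nat) (rv sv : 'I_m -> nat).

Definition rtot := \sum_(i < m) rv i.
Definition stot := \sum_(i < m) sv i.

(* coordinates are 1-based naturals stored in ordinals of a bound large enough *)
Definition Bnd := n + rtot + stot + 1.

(* cell (row,col) of the (n,p,q)^- staircase *)
Definition in_stair (p q row col : nat) : bool :=
  [&& 1 <= row <= p + n, 1 <= col <= n + q, row <= col + p &
      ~~ ((row <= p) && (n < col))].

Definition is_diag (p row col : nat) : bool := (row == col + p) && (1 <= col <= n).

(* non-diagonal cells of page i : ((i,row),col) *)
Definition page_ok (c : 'I_m * 'I_Bnd * 'I_Bnd) : bool :=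
  in_stair (rv c.1.1) (sv c.1.1) c.1.2 c.2 && ~~ is_diag (rv c.1.1) c.1.2 c.2.

Definition PageCell := {c : 'I_m * 'I_Bnd * 'I_Bnd | page_ok c}.

(* cells of the book: the n shared (identified) diagonal cells, the j-th
   diagonal cell being  inl (j-1), plus the non-diagonal cells of all pages *)
Definition Cell : finType := ('I_n + PageCell)%type.

(* number of entries (r+s+1)n + m binom(n,2); entries are 0..N-1 instead of 1..N *)
Definition Nent := (rtot + stot + 1) * n + m * 'C(n, 2).

Definition is_SB (f : {ffun Cell -> 'I_Nent}) : bool :=
  [&& injectiveb f,
      [forall v : 'I_Nent, exists c : Cell, f c == v] &
      [forall pc : PageCell,
        let: (i, row, col) := val pc in
        [forall j : 'I_n,
            ((nat_of_ord row == j.+1 + rv i) ==> (f (inl j) < f (inr pc))) &&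
            ((nat_of_ord col == j.+1) ==> (f (inr pc) < f (inl j)))]]].

Definition SBminus : {set {ffun Cell -> 'I_Nent}} := [set f | is_SB f].
End SBdef.

From mathcomp Require Import all_boot order zify.
Set Implicit Arguments. Unset Strict Implicit. Unset Printing Implicit Defensive.

(* A Selberg book and a Selberg permutation are both linear orderings subject
   to constraints "x_j comes before u" and "u comes before x_j".  Identify the
   shared diagonal cells with the letters x_j, and send the non-diagonal cell in
   row i, column j of page t to b_j if i <= r_t, to a_(i - r_t, j) of page t if
   r_t < i and j <= n, and to c_(i - r_t) if n < j, the upper indices of b and c
   enumerating the pairs (t, i) resp. (t, j - n) through [tagnat].  This is a
   bijection from cells to letters, under which "x_j before the cell" means the
   cell lies in row j + r_t and "the cell before x_j" means it lies in column j;
   these are exactly the constraints of a Selberg permutation, except x_i < x_j,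
   which follows from x_i < a_ij < x_j on the first page (here m > 0 is used). *)

Lemma tagnat_sig_inj m (p : 'I_m -> nat) (k k' : 'I_(\sum_(i < m) p i)) :
  tagnat.sig1 k = tagnat.sig1 k' -> tagnat.sig2 k = tagnat.sig2 k' :> nat -> k = k'.
Proof.
move=> e1 e2; apply: tagnat.sig_inj; rewrite !tagnat.sigE12.
by move: (tagnat.sig2 k) (tagnat.sig2 k') e2; rewrite e1 => u u' /val_inj ->.
Qed.

Lemma leq_summand m (p : 'I_m -> nat) t : p t <= \sum_(i < m) p i.
Proof. by rewrite (bigD1 t) //= leq_addr. Qed.

Lemma card_pairs n : #|{: pairs n}| = 'C(n, 2).
Proof.
rewrite card_sig -bin2_sum big_mkord -sum1_card.
have -> : \sum_(x : 'I_n * 'I_n | x.1 < x.2) 1 = \sum_(i < n) \sum_(j < n | i < j) 1.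
  by rewrite pair_big_dep.
rewrite (exchange_big_dep xpredT) //=; apply: eq_bigr => j _.
rewrite -(big_ord_widen_cond n xpredT (fun=> 1) (ltnW (ltn_ord j))) /=.
by rewrite sum1_card card_ord.
Qed.

Lemma card_ffun_precomp (A B T U : finType) (h : B -> A) (k : T -> U)
    (P : pred {ffun B -> U}) : bijective h -> bijective k ->
  #|[set g : {ffun A -> T} | P [ffun b => k (g (h b))]]| = #|[set f | P f]|.
Proof.
move=> [h' hK h'K] [k' kK k'K].
pose F (g : {ffun A -> T}) : {ffun B -> U} := [ffun b => k (g (h b))].
have F_bij : bijective F.
  by exists (fun f : {ffun B -> U} => [ffun a => k' (f (h' a))]) => g; apply/ffunP => x;
    rewrite !ffunE ?h'K ?hK ?kK ?k'K.
rewrite -(on_card_preimset (onW_bij _ F_bij)); apply: eq_card => g.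
by rewrite !inE.
Qed.

Definition respects (I A : Type) (x : I -> A) (after before : A -> I -> bool)
    (f : A -> nat) :=
  forall a i, (after a i -> f (x i) < f a) /\ (before a i -> f a < f (x i)).

Lemma respects_transport (I A B : Type) (h : A -> B) (h' : B -> A)
    (xA : I -> A) (xB : I -> B) (afterA beforeA : A -> I -> bool)
    (afterB beforeB : B -> I -> bool) (fA : A -> nat) (fB : B -> nat) :
  cancel h' h -> (forall i, h (xA i) = xB i) ->
  (forall a i, afterB (h a) i = afterA a i) ->
  (forall a i, beforeB (h a) i = beforeA a i) ->
  (forall a, fB (h a) = fA a) ->
  respects xB afterB beforeB fB <-> respects xA afterA beforeA fA.
Proof.
move=> h'K hx hafter hbefore hf; split=> resp a i.
  by rewrite -!hf hx -hafter -hbefore; apply: resp.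
by rewrite -[a]h'K hafter hbefore -hx !hf; apply: resp.
Qed.

Section SelbergCorrespondence.
Variables (n m : nat) (r s : 'I_m -> nat).
Hypothesis n_gt0 : 0 < n.
Local Notation R := (\sum_(i < m) r i).
Local Notation S := (\sum_(i < m) s i).
Local Notation L := (Letter n R S m).
Local Notation C := (Cell n r s).
Local Notation PC := (PageCell n r s).
Local Notation Coord := ('I_n + ('I_m * nat * nat))%type.

Definition on_page (t : 'I_m) (row col : nat) :=
  in_stair n (r t) (s t) row col && ~~ is_diag n (r t) row col.

Definition cell_coord (c : C) : Coord :=
  match c with
  | inl j => inl j
  | inr pc => inr ((val pc).1.1, nat_of_ord (val pc).1.2, nat_of_ord (val pc).2)
  end.

Definition letter_coord (l : L) : Coord :=
  match l with
  | inl (inl i) => inl i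
  | inl (inr (p, k)) => inr (k, (val p).1.+1 + r k, (val p).2.+1)
  | inr (inl (i, k)) => inr (tagnat.sig1 k, (tagnat.sig2 k).+1, i.+1)
  | inr (inr (i, k)) =>
      inr (tagnat.sig1 k, i.+1 + r (tagnat.sig1 k), n + (tagnat.sig2 k).+1)
  end.

Definition coord_after (x : Coord) (j : 'I_n) :=
  if x is inr (t, row, _) then row == j.+1 + r t else false.

Definition coord_before (x : Coord) (j : 'I_n) :=
  if x is inr (_, _, col) then col == j.+1 else false.

Definition letter_after (l : L) (j : 'I_n) :=
  match l with
  | inl (inr (p, _)) => (val p).1 == j
  | inr (inr (i, _)) => i == j
  | _ => false
  end.

Definition letter_before (l : L) (j : 'I_n) :=
  match l with
  | inl (inr (p, _)) => (val p).2 == j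
  | inr (inl (i, _)) => i == j
  | _ => false
  end.

Lemma letter_coord_after l j : coord_after (letter_coord l) j = letter_after l j.
Proof.
case: l => [[i|[p k]]|[[i k]|[i k]]] //=; rewrite ?eqn_add2r //.
by apply/negbTE/eqP; have := ltn_ord (tagnat.sig2 k); lia.
Qed.

Lemma letter_coord_before l j : coord_before (letter_coord l) j = letter_before l j.
Proof.
case: l => [[i|[p k]]|[[i k]|[i k]]] //=.
by apply/negbTE/eqP; have := ltn_ord j; lia.
Qed.

Lemma letter_coord_on_page l :
  if letter_coord l is inr (t, row, col) then on_page t row col else true.
Proof.
rewrite /on_page /in_stair /is_diag.
case: l => [[i|[[[i j] /= ij] k]]|[[i k]|[i k]]] //=;
  have := ltn_ord i; try have := ltn_ord j; try have := ltn_ord (tagnat.sig2 k); lia.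
Qed.

Lemma Bnd_gt0 : 0 < Bnd n r s. Proof. by rewrite /Bnd addn1. Qed.

Definition cell_at (t : 'I_m) (row col : nat) : C :=
  let ord_Bnd k := insubd (Ordinal Bnd_gt0) k in
  if insub (t, ord_Bnd row, ord_Bnd col) is Some pc then inr pc
  else inl (Ordinal n_gt0).

Lemma cell_at_coord t row col :
  on_page t row col -> cell_coord (cell_at t row col) = inr (t, row, col).
Proof.
move=> ok; have /andP[/and4P[/andP[_ row_le] /andP[_ col_le] _ _] _] := ok.
have row_lt : row < Bnd n r s by rewrite /Bnd /rtot; have := leq_summand r t; lia.
have col_lt : col < Bnd n r s by rewrite /Bnd /stot; have := leq_summand s t; lia.
rewrite /cell_at; case: insubP => [pc _ pcE | ] /=.
  by rewrite pcE /= !val_insubd row_lt col_lt.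
by rewrite /page_ok /= !val_insubd row_lt col_lt -/(on_page t row col) ok.
Qed.

Definition letter_cell (l : L) : C :=
  match letter_coord l with
  | inl i => inl i
  | inr (t, row, col) => cell_at t row col
  end.

Lemma letter_cell_coord l : cell_coord (letter_cell l) = letter_coord l.
Proof.
rewrite /letter_cell; have := letter_coord_on_page l.
by case: letter_coord => [i | [[t row] col]] //; apply: cell_at_coord.
Qed.

Lemma cell_coord_inj : injective cell_coord.
Proof.
case=> [i | pc] [i' | pc'] //= []; first by move=> ->.
move=> eq_t /ord_inj eq_row /ord_inj eq_col; congr inr; apply: val_inj.
by move: eq_t eq_row eq_col; case: pc pc' => [[[? ?] ?] ?] [[[? ?] ?] ?] /= -> -> ->.
Qed.

Lemma letter_coord_inj : injective letter_coord.
Proof.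
have sig2_lt (k : 'I_R) := ltn_ord (tagnat.sig2 k).
case=> [[i|[[[a b] ab] k]]|[[i k]|[i k]]] [[i'|[[[a' b'] ab'] k']]|[[i' k']|[i' k']]] //= [].
- by move=> ->.
- move=> <- /addIn/ord_inj eq_a /ord_inj eq_b; subst a' b'.
  by rewrite (bool_irrelevance ab ab').
- by move=> -> *; exfalso; have := sig2_lt k'; lia.
- by move=> *; exfalso; have := ltn_ord b; lia.
- by move=> <- *; exfalso; have := sig2_lt k; lia.
- by move=> eq1 eq2 /ord_inj ->; rewrite (tagnat_sig_inj eq1 eq2).
- by move=> *; exfalso; have := ltn_ord i; lia.
- by move=> *; exfalso; have := ltn_ord b'; lia.
- by move=> *; exfalso; have := ltn_ord i'; lia.
- move=> eq1 + /addnI/succn_inj eq2; rewrite eq1 => /addIn/ord_inj ->.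
  by rewrite (tagnat_sig_inj eq1 eq2).
Qed.

Lemma letter_coord_onto (pc : PC) : exists l, letter_coord l = cell_coord (inr pc).
Proof.
case: pc => [[[t row] col] /= ok]; rewrite /page_ok /in_stair /is_diag /= in ok.
have [row_le | row_gt] := leqP row (r t).
  have ltc : col.-1 < n by lia.
  have ltr : row.-1 < r t by lia.
  exists (lb S m (Ordinal ltc) (@tagnat.Rank _ r t (Ordinal ltr))) => /=.
  by rewrite tagnat.Rank2K /= tagnat.Rank1K; congr (inr (_, _, _)); lia.
have lt_row : row - r t - 1 < n by lia.
have [col_le | col_gt] := leqP col n.
  have lt_col : col.-1 < n by lia.
  have lt_pair : Ordinal lt_row < Ordinal lt_col by rewrite /=; lia.
  exists (la R S (exist _ (Ordinal lt_row, Ordinal lt_col) lt_pair) t) => /=.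
  by congr (inr (_, _, _)); lia.
have lt_col : col - n - 1 < s t by lia.
exists (lc R m (Ordinal lt_row) (@tagnat.Rank _ s t (Ordinal lt_col))) => /=.
by rewrite tagnat.Rank2K /= tagnat.Rank1K; congr (inr (_, _, _)); lia.
Qed.

Lemma letter_cell_bij : bijective letter_cell.
Proof.
have letter_cell_inj : injective letter_cell.
  by move=> l l' /(congr1 cell_coord); rewrite !letter_cell_coord => /letter_coord_inj.
have letter_cell_onto (c : C) : c \in codom letter_cell.
  case: c => [j | pc]; first exact: (codom_f letter_cell (lx R S m j)).
  have [l coord_l] := letter_coord_onto pc.
  by rewrite -(cell_coord_inj (etrans (letter_cell_coord l) coord_l)) codom_f.
apply: (inj_card_bij letter_cell_inj); rewrite -(card_codom letter_cell_inj).
by apply/subset_leq_card/subsetP => c _; apply: letter_cell_onto.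
Qed.

Lemma card_Letter : #|L| = Nent n r s.
Proof.
by rewrite /Nent /rtot /stot !card_sum !card_prod !card_ord card_pairs; lia.
Qed.

Definition cell_after (c : C) := coord_after (cell_coord c).
Definition cell_before (c : C) := coord_before (cell_coord c).

Lemma is_SBP (f : {ffun C -> 'I_(Nent n r s)}) : #|C| = Nent n r s ->
  reflect (injective f /\ respects inl cell_after cell_before (fun c => f c : nat))
          (is_SB f).
Proof.
move=> card_C.
apply: (iffP and3P) => [[/injectiveP f_inj _ /forallP f_ord] | [f_inj f_ord]].
  split=> // -[// | [[[t row] col] ok]] j.
  have /forallP/(_ j)/andP[f_after f_before] := f_ord (exist _ (t, row, col) ok).
  by split; apply/implyP.
split; first exact/injectiveP.
  apply/forallP => v; have /codomP[c ->] : v \in codom f.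
    by apply: inj_card_onto; rewrite // card_ord card_C.
  by apply/existsP; exists c.
apply/forallP => -[[[t row] col] ok]; apply/forallP => j.
have [f_after f_before] := f_ord (inr (exist _ (t, row, col) ok)) j.
by apply/andP; split; apply/implyP.
Qed.

Lemma is_SPP (pos : {ffun L -> 'I_#|L|}) : 0 < m ->
  reflect (injective pos /\
           respects (lx R S m) letter_after letter_before (fun l => pos l : nat))
          (is_SP pos).
Proof.
move=> m_gt0; apply: (iffP and5P).
  case=> /injectiveP pos_inj _ /forallP a_ok /forallP b_ok /forallP c_ok.
  split=> // -[[i | [p k]] | [[i k] | [i k]]] j; split=> //= /eqP <-.
  - by have /forallP/(_ k)/andP[] := a_ok p.
  - by have /forallP/(_ k)/andP[] := a_ok p.
  - by have /forallP/(_ k) := b_ok i.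
  - by have /forallP/(_ k) := c_ok i.
case=> pos_inj pos_ok; split; first exact/injectiveP.
- apply/forallP => i; apply/forallP => j; apply/implyP => lt_ij.
  pose a := la R S (exist _ (i, j) lt_ij) (Ordinal m_gt0).
  have [lt_ia _] := pos_ok a i; have [_ lt_aj] := pos_ok a j.
  exact: ltn_trans (lt_ia (eqxx _)) (lt_aj (eqxx _)).
- apply/forallP => p; apply/forallP => k; apply/andP; split.
    exact: (pos_ok (la R S p k) (val p).1).1 (eqxx _).
  exact: (pos_ok (la R S p k) (val p).2).2 (eqxx _).
- apply/forallP => i; apply/forallP => k.
  exact: (pos_ok (lb S m i k) i).2 (eqxx _).
- apply/forallP => i; apply/forallP => k.
  exact: (pos_ok (lc R m i k) i).1 (eqxx _).
Qed.

Lemma card_SBminus_SP : 0 < m -> #|SBminus n r s| = #|SP n R S m|.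
Proof.
move=> m_gt0; have [cell_letter letter_cellK cell_letterK] := letter_cell_bij.
have card_C : #|C| = Nent n r s.
  by rewrite -(bij_eq_card letter_cell_bij) card_Letter.
have cast_bij := Bijective (cast_ordK card_Letter) (cast_ordKV card_Letter).
rewrite -(card_ffun_precomp _ (Bijective cell_letterK letter_cellK) cast_bij).
apply: eq_card => pos; rewrite !inE.
set f := [ffun c => cast_ord card_Letter (pos (cell_letter c))].
have f_inj : injective f <-> injective pos.
  split=> inj_pos.
    move=> l l' eq_pos; apply: (can_inj letter_cellK); apply: inj_pos.
    by rewrite !ffunE !letter_cellK eq_pos.
  by move=> c c'; rewrite !ffunE => /cast_ord_inj/inj_pos/(can_inj cell_letterK).
have f_respects : respects inl cell_after cell_before (fun c => f c : nat) <->
    respects (lx R S m) letter_after letter_before (fun l => pos l : nat).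
  apply: (respects_transport (h := letter_cell) (h' := cell_letter)) => //.
  - by move=> l j; rewrite /cell_after letter_cell_coord letter_coord_after.
  - by move=> l j; rewrite /cell_before letter_cell_coord letter_coord_before.
  - by move=> l; rewrite ffunE letter_cellK.
by apply/(is_SBP _ card_C)/(is_SPP _ m_gt0); rewrite f_inj f_respects.
Qed.

End SelbergCorrespondence.

Theorem proposition4p2 (n m : nat) (r s : 'I_m -> nat) :
  0 < n -> 0 < m ->
  #|SBminus n r s| = #|SP n (\sum_(i < m) r i) (\sum_(i < m) s i) m|.
Proof. by move=> n_gt0; apply: card_SBminus_SP. Qed.
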